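(* Let $k\ge 1$, let $(\Lambda,d)$ be a $k$-graph, and let $p\in\mathbb{N}^k$. Then the dual $(p\Lambda,d_p)$ (defined in the context) is a $k$-graph.
   Context: A $k$-graph is a pair $(\Lambda,d)$ where $\Lambda$ is a countable category and $d:\Lambda\to\mathbb{N}^k$ is a functor satisfying the factorisation property: if $\lambda$ is a morphism with $d(\lambda)=m+n$, then there are unique morphisms $\mu\in d^{-1}(m)$, $\nu\in d^{-1}(n)$ with $\lambda=\mu\nu$. Morphisms are called paths; objects (vertices) are identified with the paths of degree $0$; $r$ and $s$ denote codomain and domain; $\Lambda^n:=d^{-1}(n)$. For $\lambda$ with $d(\lambda)=n$ and $l\le m\le n$ in $\mathbb{N}^k$, $\lambda(l,m)$ denotes the unique path with $d(\lambda(l,m))=m-l$ such that $\lambda=\lambda(0,l)\lambda(l,m)\lambda(m,n)$. For $p\in\mathbb{N}^k$, the dual $p\Lambda$ is defined as follows: its set of paths is $\{\lambda\in\Lambda: d(\lambda)\ge p\}$, its vertices are the elements of $\Lambda^p$, with range $r_p(\lambda):=\lambda(0,p)$, source $s_p(\lambda):=\lambda(d(\lambda)-p,d(\lambda))$, composition $\lambda\circ_p\mu:=\lambda\,\mu(p,d(\mu))$ $(=\lambda(0,d(\lambda)-p)\mu)$ whenever $s_p(\lambda)=r_p(\mu)$, and degree $d_p(\lambda):=d(\lambda)-p$. *)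

From Stdlib Require Import ClassicalEpsilon.
From mathcomp Require Import all_boot.
Set Implicit Arguments. Unset Strict Implicit. Unset Printing Implicit Defensive.

Definition Nk (k : nat) := {ffun 'I_k -> nat}.
Definition Nk_zero k : Nk k := [ffun _ => 0].
Definition Nk_add k (m n : Nk k) : Nk k := [ffun i => m i + n i].
(* truncated pointwise difference; only used when n <= m *)
Definition Nk_sub k (m n : Nk k) : Nk k := [ffun i => m i - n i].
Definition Nk_le k (m n : Nk k) : bool := [forall i, m i <= n i].

(** * (Small) categories: objects, morphisms, domain (source s),
     codomain (range r), identities and composition [comp f g] = f g
     (first g, then f), meaningful when [dom f = cod g]. *)
Record cat_data := CatData {
  Obj : Type;
  Mor : Type;
  dom : Mor -> Obj;
  cod : Mor -> Obj;
  idm : Obj -> Mor;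
  comp : Mor -> Mor -> Mor }.

Definition composable (C : cat_data) (f g : Mor C) : Prop := dom f = cod g.

Definition is_category (C : cat_data) : Prop :=
  (forall a : Obj C, dom (idm a) = a /\ cod (idm a) = a) /\
  (forall f g : Mor C, composable f g -> dom (comp f g) = dom g /\ cod (comp f g) = cod f) /\
  (forall f : Mor C, comp (idm (cod f)) f = f /\ comp f (idm (dom f)) = f) /\
  (forall f g h : Mor C, composable f g -> composable g h ->
      comp (comp f g) h = comp f (comp g h)).

Definition countable_type (T : Type) : Prop := exists f : T -> nat, injective f.

Record kgraph_data (k : nat) := KGraphData {
  kg_cat : cat_data;
  kg_deg : Mor kg_cat -> Nk k }.

Definition is_kgraph k (L : kgraph_data k) : Prop :=
  let C := kg_cat L in
  let d := @kg_deg k L in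
  [/\ is_category C, countable_type (Obj C) /\ countable_type (Mor C),
      (forall a : Obj C, d (idm a) = Nk_zero k),
      (forall f g : Mor C, composable f g -> d (comp f g) = Nk_add (d f) (d g)) &
      (forall (l : Mor C) (m n : Nk k), d l = Nk_add m n ->
         exists! mn : Mor C * Mor C,
           [/\ d mn.1 = m, d mn.2 = n, composable mn.1 mn.2 & l = comp mn.1 mn.2])].

Section Segments.
Variables (k : nat) (L : kgraph_data k).
Local Notation C := (kg_cat L).
Local Notation d := (@kg_deg k L).

Definition factor (l : Mor C) (m : Nk k) : Mor C * Mor C :=
  epsilon (inhabits (l, l)) (fun mn : Mor C * Mor C =>
    [/\ d mn.1 = m, d mn.2 = Nk_sub (d l) m, composable mn.1 mn.2 & l = comp mn.1 mn.2]).

(* the segment l(a, b), for a <= b <= d l *)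
Definition seg (l : Mor C) (a b : Nk k) : Mor C :=
  (factor (factor l a).2 (Nk_sub b a)).1.

Lemma Nk_subK (m n : Nk k) : Nk_le m n -> Nk_add m (Nk_sub n m) = n.
Proof.
move=> /forallP H; apply/ffunP => i; rewrite !ffunE subnKC //.
Qed.

Lemma factor_spec (HL : is_kgraph L) l m : Nk_le m (d l) ->
  [/\ d (factor l m).1 = m, d (factor l m).2 = Nk_sub (d l) m,
      composable (factor l m).1 (factor l m).2 & l = comp (factor l m).1 (factor l m).2].
Proof.
move=> Hm; rewrite /factor.
set P := (fun mn : Mor C * Mor C => _).
apply: (epsilon_spec (inhabits (l, l)) P).
move: HL; rewrite /is_kgraph => -[_ _ _ _ Hfac].
have [mn [Hmn _]] := Hfac l m (Nk_sub (d l) m) (esym (Nk_subK Hm)).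
by exists mn.
Qed.

Lemma seg_deg (HL : is_kgraph L) l a b :
  Nk_le a b -> Nk_le b (d l) -> d (seg l a b) = Nk_sub b a.
Proof.
move=> Hab Hbl.
have Hal : Nk_le a (d l).
  apply/forallP => i; apply: leq_trans (forallP Hab i) (forallP Hbl i).
have [_ H2 _ _] := factor_spec HL Hal.
have [H1 _ _ _] := factor_spec HL (l := (factor l a).2) (m := Nk_sub b a)
  ltac:(rewrite H2; apply/forallP => i; rewrite !ffunE;
        exact: leq_sub2r (forallP Hbl i)).
exact: H1.
Qed.

Lemma seg_range_deg (HL : is_kgraph L) (p : Nk k) l :
  Nk_le p (d l) -> d (seg l (Nk_zero k) p) = p.
Proof.
move=> Hp; rewrite seg_deg //; last by apply/forallP => i; rewrite ffunE.
by apply/ffunP => i; rewrite !ffunE subn0.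
Qed.

Lemma seg_source_deg (HL : is_kgraph L) (p : Nk k) l :
  Nk_le p (d l) -> d (seg l (Nk_sub (d l) p) (d l)) = p.
Proof.
move=> Hp; rewrite seg_deg //; last by apply/forallP => i.
  by apply/ffunP => i; rewrite !ffunE subKn // (forallP Hp i).
by apply/forallP => i; rewrite ffunE leq_subr.
Qed.

End Segments.

Section Dual.
Variables (k : nat) (L : kgraph_data k) (HL : is_kgraph L) (p : Nk k).
Local Notation C := (kg_cat L).
Local Notation d := (@kg_deg k L).

Definition dual_obj := {v : Mor C | d v == p}.
Definition dual_mor := {l : Mor C | Nk_le p (d l)}.

Definition dual_cod (l : dual_mor) : dual_obj :=
  exist _ (seg (val l) (Nk_zero k) p)
    (introT eqP (seg_range_deg HL (valP l))).

Definition dual_dom (l : dual_mor) : dual_obj :=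
  exist _ (seg (val l) (Nk_sub (d (val l)) p) (d (val l)))
    (introT eqP (seg_source_deg HL (valP l))).

Definition dual_idm (v : dual_obj) : dual_mor :=
  exist _ (val v) (introT idP
    (eq_ind_r (fun x => Nk_le p x) (introT forallP (fun i => leqnn (p i)))
       (elimT eqP (valP v)))).

(* λ ∘_p μ = λ μ(p, d(μ)); the fallback value λ is only used when the
   result does not lie in pΛ (which does not happen for composable pairs) *)
Definition dual_comp (l m : dual_mor) : dual_mor :=
  insubd l (comp (val l) (seg (val m) p (d (val m)))).

Definition dual_deg (l : dual_mor) : Nk k := Nk_sub (d (val l)) p.

Definition dual_cat : cat_data :=
  @CatData dual_obj dual_mor dual_dom dual_cod dual_idm dual_comp.

Definition dual : kgraph_data k := @KGraphData k dual_cat dual_deg.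

End Dual.

From Pilot Require Import Defs.
From mathcomp Require Import all_boot zify.
Set Implicit Arguments. Unset Strict Implicit. Unset Printing Implicit Defensive.

(* A path l of pΛ splits in Λ both as l = l(0, p) l(p, d l) and as
   l = l(0, d l - p) s_p(l), with the outer factors of degree p.  Hence, when
   s_p(l) = r_p(m), the composite l ∘_p m = l m(p, d m) is also
   l(0, d l - p) m, and every axiom of pΛ reduces to the same axiom of Λ
   through uniqueness of factorisations.  For the factorisation property: if
   d l - p = a + b, factor l in Λ as x y z with degrees a, p, b; then
   (x y, y z) is the unique factorisation of l in pΛ. *)

Local Notation comp := Defs.comp (only parsing).

Ltac nk_lia :=
  let i := fresh "i" in
  intros; (apply/ffunP => i || apply/forallP => i);
  repeat match goal with
  | H : @eq (Nk _) _ _ |- _ => move: (congr1 (fun f : Nk _ => f i) H); clear H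
  | H : is_true (Nk_le _ _) |- _ => move: (forallP H i); clear H
  end;
  rewrite /Nk_add /Nk_sub /Nk_zero /= ?ffunE; lia.

Section KGraphTheory.
Variables (k : nat) (L : kgraph_data k) (HL : is_kgraph L).
Local Notation C := (kg_cat L).
Local Notation d := (@kg_deg k L).

Lemma kgraph_category : is_category C.
Proof. by case: HL. Qed.

Lemma dom_idm (a : Obj C) : dom (idm a) = a.
Proof. by have [/(_ a) []] := kgraph_category. Qed.

Lemma cod_idm (a : Obj C) : cod (idm a) = a.
Proof. by have [/(_ a) []] := kgraph_category. Qed.

Lemma dom_comp (f g : Mor C) : composable f g -> dom (comp f g) = dom g.
Proof. by have [_ [H _]] := kgraph_category => /H []. Qed.

Lemma cod_comp (f g : Mor C) : composable f g -> cod (comp f g) = cod f.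
Proof. by have [_ [H _]] := kgraph_category => /H []. Qed.

Lemma comp_idml (f : Mor C) : comp (idm (cod f)) f = f.
Proof. by have [_ [_ [/(_ f) []]]] := kgraph_category. Qed.

Lemma comp_idmr (f : Mor C) : comp f (idm (dom f)) = f.
Proof. by have [_ [_ [/(_ f) []]]] := kgraph_category. Qed.

Lemma comp_assoc (f g h : Mor C) : composable f g -> composable g h ->
  comp (comp f g) h = comp f (comp g h).
Proof. by have [_ [_ [_ H]]] := kgraph_category; apply: H. Qed.

Lemma composable_idml (f : Mor C) : composable (idm (cod f)) f.
Proof. exact: dom_idm. Qed.

Lemma composable_idmr (f : Mor C) : composable f (idm (dom f)).
Proof. by rewrite /composable cod_idm. Qed.

Lemma deg_idm (a : Obj C) : d (idm a) = Nk_zero k.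
Proof. by case: HL. Qed.

Lemma deg_comp (f g : Mor C) : composable f g -> d (comp f g) = Nk_add (d f) (d g).
Proof. by case: HL => _ _ _ H _; apply: H. Qed.

Lemma factorisation_unique (a b a' b' : Mor C) :
  composable a b -> composable a' b' -> comp a b = comp a' b' -> d a = d a' ->
  a = a' /\ b = b'.
Proof.
move=> Hab Hab' E Ea.
have [_ _ _ _ Hfac] := HL.
have Hdab : d (comp a b) = Nk_add (d a) (d b) by rewrite deg_comp.
have Eb : d b' = d b.
  by have := deg_comp Hab'; rewrite -E Hdab; nk_lia.
have [[x y] [_ Hxy]] := Hfac _ _ _ Hdab.
have E1 := Hxy (a, b) (And4 erefl erefl Hab erefl).
have E2 := Hxy (a', b') (And4 (esym Ea) Eb Hab' E).
by move: E2; rewrite E1 => -[-> ->].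
Qed.

Lemma seg_unique (l al mu be : Mor C) :
  composable al mu -> composable mu be -> l = comp al (comp mu be) ->
  seg l (d al) (Nk_add (d al) (d mu)) = mu.
Proof.
move=> Hal Hmu El.
have Hal' : composable al (comp mu be) by rewrite /composable cod_comp.
have Hdl : d l = Nk_add (d al) (Nk_add (d mu) (d be)) by rewrite El !deg_comp.
have Hle_l : Nk_le (d al) (d l) by nk_lia.
have [F1 _ F3 F4] := factor_spec HL Hle_l.
rewrite /seg; have [_ ->] := factorisation_unique F3 Hal' (etrans (esym F4) El) F1.
have Ediff : Nk_sub (Nk_add (d al) (d mu)) (d al) = d mu by nk_lia.
have Hle_mb : Nk_le (Nk_sub (Nk_add (d al) (d mu)) (d al)) (d (comp mu be)).
  by rewrite deg_comp // Ediff; nk_lia.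
have [G1 _ G3 G4] := factor_spec HL Hle_mb.
by have [] := factorisation_unique G3 Hmu (esym G4) (etrans G1 Ediff).
Qed.

Lemma seg_prefix (mu be : Mor C) :
  composable mu be -> seg (comp mu be) (Nk_zero k) (d mu) = mu.
Proof.
move=> Hmu.
have El : comp mu be = comp (idm (cod mu)) (comp mu be).
  by rewrite -comp_assoc ?comp_idml //; apply: composable_idml.
have := seg_unique (composable_idml mu) Hmu El.
by rewrite deg_idm; have -> : Nk_add (Nk_zero k) (d mu) = d mu by nk_lia.
Qed.

Lemma seg_suffix (al mu : Mor C) :
  composable al mu -> seg (comp al mu) (d al) (d (comp al mu)) = mu.
Proof.
move=> Hal.
have := seg_unique Hal (composable_idmr mu) (congr1 _ (esym (comp_idmr mu))).
by rewrite deg_comp.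
Qed.

Lemma seg_split (l : Mor C) (a : Nk k) : Nk_le a (d l) ->
  [/\ composable (seg l (Nk_zero k) a) (seg l a (d l)),
      l = comp (seg l (Nk_zero k) a) (seg l a (d l)),
      d (seg l (Nk_zero k) a) = a & d (seg l a (d l)) = Nk_sub (d l) a].
Proof.
move=> /(factor_spec HL); case: (factor l a) => x y /= [Hx Hy Hxy El]; subst a l.
by rewrite seg_prefix // seg_suffix.
Qed.

Lemma cod_seg_prefix (l : Mor C) (a : Nk k) : Nk_le a (d l) ->
  cod (seg l (Nk_zero k) a) = cod l.
Proof. by move=> /seg_split [Hc El _ _]; rewrite [in cod l]El cod_comp. Qed.

Lemma dom_seg_suffix (l : Mor C) (a : Nk k) : Nk_le a (d l) ->
  dom (seg l a (d l)) = dom l.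
Proof. by move=> /seg_split [Hc El _ _]; rewrite [in dom l]El dom_comp. Qed.

End KGraphTheory.

Section Dual.
Variables (k : nat) (L : kgraph_data k) (HL : is_kgraph L) (p : Nk k).
Local Notation C := (kg_cat L).
Local Notation d := (@kg_deg k L).
Local Notation r_p l := (seg l (Nk_zero k) p).
Local Notation s_p l := (seg l (Nk_sub (d l) p) (d l)).
Local Notation tail l := (seg l p (d l)).
Local Notation head l := (seg l (Nk_zero k) (Nk_sub (d l) p)).

Lemma r_p_vertex (v : Mor C) : d v = p -> r_p v = v.
Proof.
move=> <-; have := seg_prefix HL (composable_idmr HL v).
by rewrite (comp_idmr HL).
Qed.

Lemma s_p_vertex (v : Mor C) : d v = p -> s_p v = v.
Proof.
move=> Hv; have := seg_suffix HL (composable_idml HL v).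
by rewrite (comp_idml HL) (deg_idm HL); have -> : Nk_sub (d v) p = Nk_zero k by nk_lia.
Qed.

Lemma tail_vertex (v : Mor C) : d v = p -> tail v = idm (dom v).
Proof.
move=> <-; have := seg_suffix HL (composable_idmr HL v).
by rewrite (comp_idmr HL).
Qed.

Lemma split_s_p (l : Mor C) : Nk_le p (d l) ->
  [/\ composable (head l) (s_p l), l = comp (head l) (s_p l),
      d (head l) = Nk_sub (d l) p & d (s_p l) = p].
Proof.
move=> Hp; have Hle : Nk_le (Nk_sub (d l) p) (d l) by nk_lia.
have [Hc El Dh Ds] := seg_split HL Hle.
by split=> //; rewrite Ds; nk_lia.
Qed.

Lemma dom_s_p (l : Mor C) : dom (s_p l) = dom l.
Proof. by apply: (dom_seg_suffix HL); nk_lia. Qed.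

Lemma comp_split_r_p (a b : Mor C) : composable a b -> Nk_le p (d a) ->
  [/\ composable (r_p a) (comp (tail a) b),
      comp a b = comp (r_p a) (comp (tail a) b) & d (r_p a) = p].
Proof.
move=> Hab Ha; have [Hrt Ea Dr _] := seg_split HL Ha.
have Htb : composable (tail a) b by rewrite /composable (dom_seg_suffix HL).
split=> //; first by rewrite /composable (cod_comp HL).
by rewrite -(comp_assoc HL) // -Ea.
Qed.

Lemma r_p_comp (a b : Mor C) : composable a b -> Nk_le p (d a) ->
  r_p (comp a b) = r_p a.
Proof.
move=> Hab /(comp_split_r_p Hab) [Hc -> Dr].
by have := seg_prefix HL Hc; rewrite Dr.
Qed.

Lemma tail_comp (a b : Mor C) : composable a b -> Nk_le p (d a) ->
  tail (comp a b) = comp (tail a) b.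
Proof.
move=> Hab /(comp_split_r_p Hab) [Hc -> Dr].
by have := seg_suffix HL Hc; rewrite Dr.
Qed.

Lemma s_p_comp (a b : Mor C) : composable a b -> Nk_le p (d b) ->
  s_p (comp a b) = s_p b.
Proof.
move=> Hab Hb; have [Hhs Eb _ Ds] := split_s_p Hb.
have Hah : composable a (head b) by rewrite /composable (cod_seg_prefix HL) //; nk_lia.
have Hah_s : composable (comp a (head b)) (s_p b) by rewrite /composable (dom_comp HL).
have := seg_suffix HL Hah_s.
rewrite (comp_assoc HL) // -Eb.
by have -> : d (comp a (head b)) = Nk_sub (d (comp a b)) p
  by rewrite !(deg_comp HL) // {3}Eb (deg_comp HL) // Ds; nk_lia.
Qed.

Lemma dual_compE (f g : dual_mor L p) : dual_dom HL f = dual_cod HL g ->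
  composable (val f) (tail (val g)) /\
  val (dual_comp f g) = comp (val f) (tail (val g)).
Proof.
move=> /(congr1 val) /= Hfg.
have Hf : Nk_le p (d (val f)) := valP f.
have Hg : Nk_le p (d (val g)) := valP g.
have [Hrt _ _ Dt] := seg_split HL Hg.
have Hc : composable (val f) (tail (val g)) by rewrite /composable -dom_s_p Hfg.
have Hle : Nk_le p (d (comp (val f) (tail (val g)))) by rewrite (deg_comp HL) // Dt; nk_lia.
by split=> //; rewrite val_insubd Hle.
Qed.

Lemma dual_comp_head (f g : dual_mor L p) : dual_dom HL f = dual_cod HL g ->
  composable (head (val f)) (val g) /\
  val (dual_comp f g) = comp (head (val f)) (val g).
Proof.
move=> H; have [_ ->] := dual_compE H.
have Hfg : s_p (val f) = r_p (val g) := congr1 val H.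
have [Hhs Ef _ _] := split_s_p (valP f).
have [Hrt Eg _ _] := seg_split HL (valP g).
have Hst : composable (s_p (val f)) (tail (val g)) by rewrite Hfg.
have Hhg : composable (head (val f)) (val g).
  by rewrite /composable Hhs Hfg (cod_seg_prefix HL) //; apply: (valP g).
by split=> //; rewrite {1}Ef (comp_assoc HL) // Hfg -Eg.
Qed.

Lemma dual_dom_idm (v : dual_obj L p) : dual_dom HL (dual_idm v) = v.
Proof. by apply: val_inj; exact: s_p_vertex (eqP (valP v)). Qed.

Lemma dual_cod_idm (v : dual_obj L p) : dual_cod HL (dual_idm v) = v.
Proof. by apply: val_inj; exact: r_p_vertex (eqP (valP v)). Qed.

Lemma dual_dom_comp (f g : dual_mor L p) : dual_dom HL f = dual_cod HL g ->
  dual_dom HL (dual_comp f g) = dual_dom HL g.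
Proof.
move=> H; apply: val_inj => /=; have [Hc ->] := dual_comp_head H.
exact: s_p_comp Hc (valP g).
Qed.

Lemma dual_cod_comp (f g : dual_mor L p) : dual_dom HL f = dual_cod HL g ->
  dual_cod HL (dual_comp f g) = dual_cod HL f.
Proof.
move=> H; apply: val_inj => /=; have [Hc ->] := dual_compE H.
exact: r_p_comp Hc (valP f).
Qed.

Lemma dual_comp_idml (f : dual_mor L p) : dual_comp (dual_idm (dual_cod HL f)) f = f.
Proof.
apply: val_inj; have [_ ->] := dual_compE (dual_dom_idm (dual_cod HL f)).
by have [_ <- _ _] := seg_split HL (valP f).
Qed.

Lemma dual_comp_idmr (f : dual_mor L p) : dual_comp f (dual_idm (dual_dom HL f)) = f.
Proof.
apply: val_inj; have [_ ->] := dual_compE (esym (dual_cod_idm (dual_dom HL f))).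
have [_ _ _ Ds] := split_s_p (valP f).
by rewrite /= tail_vertex // dom_s_p (comp_idmr HL).
Qed.

Lemma dual_comp_assoc (f g h : dual_mor L p) :
  dual_dom HL f = dual_cod HL g -> dual_dom HL g = dual_cod HL h ->
  dual_comp (dual_comp f g) h = dual_comp f (dual_comp g h).
Proof.
move=> Hfg Hgh; apply: val_inj.
have [_ ->] := dual_compE (etrans (dual_dom_comp Hfg) Hgh).
have [Hf_tg ->] := dual_compE Hfg.
have [_ ->] := dual_compE (etrans Hfg (esym (dual_cod_comp Hgh))).
have [Hg_th ->] := dual_compE Hgh.
have Htg_th : composable (tail (val g)) (tail (val h)).
  by rewrite /composable (dom_seg_suffix HL) //; apply: (valP g).
by rewrite tail_comp ?(comp_assoc HL) //; apply: (valP g).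
Qed.

Lemma dual_is_category : is_category (dual_cat HL p).
Proof.
split; [|split; [|split]].
- by move=> v; split; [exact: dual_dom_idm | exact: dual_cod_idm].
- by move=> f g H; split; [exact: dual_dom_comp | exact: dual_cod_comp].
- by move=> f; split; [exact: dual_comp_idml | exact: dual_comp_idmr].
- exact: dual_comp_assoc.
Qed.

Lemma dual_countable : countable_type (dual_obj L p) /\ countable_type (dual_mor L p).
Proof.
have [_ [_ [f Hf]] _ _ _] := HL.
by split; exists (f \o val) => x y /Hf /val_inj.
Qed.

Lemma dual_deg_idm (v : dual_obj L p) : dual_deg (dual_idm v) = Nk_zero k.
Proof.
have Hv : d (val v) = p := eqP (valP v).
by rewrite /dual_deg /=; nk_lia.
Qed.

Lemma dual_deg_comp (f g : dual_mor L p) : dual_dom HL f = dual_cod HL g ->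
  dual_deg (dual_comp f g) = Nk_add (dual_deg f) (dual_deg g).
Proof.
move=> H; rewrite /dual_deg; have [Hc ->] := dual_compE H.
have Hf : Nk_le p (d (val f)) := valP f.
have [_ _ _ Dt] := seg_split HL (valP g).
by rewrite (deg_comp HL) // Dt; nk_lia.
Qed.

Lemma dual_factorisation_unique (mu nu mu' nu' : dual_mor L p) :
  dual_dom HL mu = dual_cod HL nu -> dual_dom HL mu' = dual_cod HL nu' ->
  dual_comp mu nu = dual_comp mu' nu' -> dual_deg mu = dual_deg mu' ->
  mu = mu' /\ nu = nu'.
Proof.
move=> H H' /(congr1 val) E Dmu.
have [_ _ Dh _] := split_s_p (valP mu).
have [_ _ Dh' _] := split_s_p (valP mu').
have Hmu : Nk_le p (d (val mu)) := valP mu.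
have Hmu' : Nk_le p (d (val mu')) := valP mu'.
have [Hh Eh] := dual_comp_head H.
have [Hh' Eh'] := dual_comp_head H'.
have [_ Enu] := factorisation_unique HL Hh Hh' (etrans (esym Eh) (etrans E Eh'))
  (etrans Dh (etrans Dmu (esym Dh'))).
have [Hc Ec] := dual_compE H.
have [Hc' Ec'] := dual_compE H'.
have Dv : d (val mu) = d (val mu') by move: Dmu; rewrite /dual_deg; nk_lia.
have [Emu _] := factorisation_unique HL Hc Hc' (etrans (esym Ec) (etrans E Ec')) Dv.
by split; apply: val_inj.
Qed.

Lemma dual_factorisation_exists (l : dual_mor L p) (m n : Nk k) :
  dual_deg l = Nk_add m n -> exists mu nu : dual_mor L p,
    [/\ dual_deg mu = m, dual_deg nu = n, dual_dom HL mu = dual_cod HL nu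
      & l = dual_comp mu nu].
Proof.
rewrite /dual_deg => Dl.
have Hl : Nk_le p (d (val l)) := valP l.
have Hm : Nk_le m (d (val l)) by nk_lia.
move: (factor_spec HL Hm); case: (factor (val l) m) => x yz /= [Dx Dyz Hxyz El].
have Hyz : Nk_le p (d yz) by rewrite Dyz; nk_lia.
have [Hrt Eyz Dr _] := seg_split HL Hyz.
have Hxr : composable x (r_p yz) by rewrite /composable Hxyz (cod_seg_prefix HL).
have Hmu : Nk_le p (d (comp x (r_p yz))) by rewrite (deg_comp HL) // Dr; nk_lia.
pose mu : dual_mor L p := exist _ (comp x (r_p yz)) Hmu.
pose nu : dual_mor L p := exist _ yz Hyz.
have Hmn : dual_dom HL mu = dual_cod HL nu.
  by apply: val_inj; rewrite /= s_p_comp ?s_p_vertex // Dr; nk_lia.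
exists mu, nu; split=> //=.
- by rewrite (deg_comp HL) // Dx Dr; nk_lia.
- by rewrite Dyz; nk_lia.
- apply: val_inj; have [_ ->] := dual_compE Hmn.
  by rewrite /= (comp_assoc HL) // -Eyz -El.
Qed.

End Dual.

Theorem proposition3p2 (k : nat) (hk : 1 <= k) (L : kgraph_data k)
  (HL : is_kgraph L) (p : Nk k) :
  is_kgraph (dual HL p).
Proof.
(* [hk] is unused: the argument works verbatim for k = 0. *)
split.
- exact: dual_is_category.
- exact: dual_countable.
- exact: dual_deg_idm.
- exact: dual_deg_comp.
- move=> l m n /dual_factorisation_exists [mu [nu Hmn]].
  exists (mu, nu); split=> // -[mu' nu'] /= [Dmu' Dnu' H' E'].
  have [Dmu _ H E] := Hmn.
  by have [-> ->] := dual_factorisation_unique H H' (etrans (esym E) E')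
    (etrans Dmu (esym Dmu')).
Qed.
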